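(* Let $k\ge 2$ and let $\overline{x}\in\Sigma_k^*$ be a fixed point of $\mathcal P_k$. Let $b_1>b_2>\dots>b_r$ be the letters occurring in $\overline{x}$, and for $1\le j\le r$ let $n_j=\lfloor \log_k |\overline{x}|_{b_j}\rfloor$, so that $n_j+1$ is the number of base-$k$ digits of $|\overline{x}|_{b_j}$ (equivalently, $\overline{x}=A_1b_1A_2b_2\cdots A_rb_r$ where $A_j=[|\overline x|_{b_j}]_k$ is a word of length $n_j+1$ whose first letter is nonzero). Then \[\sum_{j=1}^{r} n_j\;\ge\;\sum_{j=1}^{r}k^{n_j}-2r.\]
   Context: Fix an integer $k\ge 2$ and the alphabet $\Sigma_k=\{0,1,\dots,k-1\}$. A word is a finite nonempty string of letters of $\Sigma_k$ (leading zeros allowed); $\Sigma_k^*$ denotes the set of words. For a word $x$, $|x|$ denotes its length and $|x|_i$ the number of occurrences of the letter $i$ in $x$. For a positive integer $c$, $[c]_k$ denotes its standard base-$k$ representation without leading zeros, viewed as a word over $\Sigma_k$; it has $\lfloor\log_k c\rfloor+1$ letters. The map $\mathcal P_k:\Sigma_k^*\to\Sigma_k^*$ is defined as follows: if $b_1>b_2>\dots>b_r$ are exactly the letters occurring in $x$ (i.e. those with $|x|_{b_j}\neq 0$), then $\mathcal P_k(x)=[|x|_{b_1}]_k\,b_1\,[|x|_{b_2}]_k\,b_2\cdots[|x|_{b_r}]_k\,b_r$ (concatenation). A fixed point is a word $x$ with $\mathcal P_k(x)=x$. *)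

From mathcomp Require Import all_boot.
Set Implicit Arguments. Unset Strict Implicit. Unset Printing Implicit Defensive.

Definition is_word (k : nat) (x : seq nat) : bool :=
  (x != [::]) && all (fun a => a < k) x.

(* [c]_k : base-k representation of c > 0, most significant digit first,
   with trunc_log k c + 1 = floor(log_k c) + 1 digits. *)
Definition digits (k c : nat) : seq nat :=
  let n := trunc_log k c in
  [seq (c %/ k ^ (n - i)) %% k | i <- iota 0 n.+1].

Definition letters (k : nat) (x : seq nat) : seq nat :=
  [seq b <- rev (iota 0 k) | b \in x].

Definition Pk (k : nat) (x : seq nat) : seq nat :=
  flatten [seq digits k (count_mem b x) ++ [:: b] | b <- letters k x].

From mathcomp Require Import all_boot.

Set Implicit Arguments.
Unset Strict Implicit.
Unset Printing Implicit Defensive.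

(* A fixed point is exactly as long as its image: each letter b_j contributes
   the n_j + 1 digits of its count followed by b_j itself, so
   |x| = sum_j (n_j + 2).  Counting the letters of x instead gives
   |x| = sum_j |x|_{b_j} >= sum_j k^(n_j). *)

Lemma size_digits (k c : nat) : size (digits k c) = (trunc_log k c).+1.
Proof. by rewrite size_map size_iota. Qed.

Lemma size_Pk (k : nat) (x : seq nat) :
  size (Pk k x) = \sum_(b <- letters k x) (trunc_log k (count_mem b x)).+2.
Proof.
rewrite size_flatten /shape -map_comp sumnE big_map.
by apply: eq_bigr => b _; rewrite /comp size_cat size_digits addn1.
Qed.

Lemma letters_uniq (k : nat) (x : seq nat) : uniq (letters k x).
Proof. by rewrite filter_uniq // rev_uniq iota_uniq. Qed.

Lemma mem_letters (k : nat) (x : seq nat) (b : nat) :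
  (b \in letters k x) = (b \in x) && (b < k).
Proof. by rewrite mem_filter mem_rev mem_iota. Qed.

Lemma sum_count_mem (T : eqType) (s x : seq T) :
  uniq s -> {subset x <= s} -> \sum_(b <- s) count_mem b x = size x.
Proof.
move=> s_uniq; elim: x => [|a x IHx] x_s /=; first by rewrite big1.
have a_s : a \in s by apply: x_s; rewrite mem_head.
rewrite big_split /= IHx => [|y y_x]; last by apply: x_s; rewrite inE y_x orbT.
rewrite -add1n; congr (_ + _).
by rewrite -big_mkcond sum1_count (eq_count (eq_sym a)) count_uniq_mem ?a_s.
Qed.

Lemma sum_expn_trunc_log_count_le (k : nat) (s x : seq nat) :
  1 < k -> {subset s <= x} ->
  \sum_(b <- s) k ^ trunc_log k (count_mem b x) <= \sum_(b <- s) count_mem b x.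
Proof.
move=> k_gt1 s_x; rewrite big_seq_cond [X in _ <= X]big_seq_cond.
apply: leq_sum => b /andP[b_s _]; apply: trunc_logP => //.
by rewrite -has_count has_pred1 s_x.
Qed.

Theorem theorem2 (k : nat) (x : seq nat) :
  2 <= k -> is_word k x -> Pk k x = x ->
  \sum_(b <- letters k x) k ^ trunc_log k (count_mem b x)
    <= \sum_(b <- letters k x) trunc_log k (count_mem b x) + 2 * size (letters k x).
Proof.
move=> k_ge2 /andP[_ /allP x_lt_k] x_fixed.
have letters_x : {subset letters k x <= x} by move=> b; rewrite mem_letters => /andP[].
have x_letters : {subset x <= letters k x}.
  by move=> b b_x; rewrite mem_letters b_x x_lt_k.
apply: leq_trans (sum_expn_trunc_log_count_le k_ge2 letters_x) _.
rewrite sum_count_mem ?letters_uniq // -{1}x_fixed size_Pk.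
rewrite -[size _]sum1_size big_distrr -big_split /=.
by apply: leq_sum => b _; rewrite muln1 addn2.
Qed.
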